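(* Every $\mathrm{CAT}(0)$ group $G$ satisfies the quadratic radial isoperimetric inequality: there exist a finite presentation $G=\langle S\mid R\rangle$ and a constant $C>0$ such that for every word $w=s_1\cdots s_n\in F_S$ representing the identity $e$ of $G$, $$\mathrm{Area}(w)\leq C\sum_{i=1}^n\big(d_S(\bar w(i),e)+1\big),$$ where $\bar w(i)$ is the image in $G$ of $s_1\cdots s_i$.
   Context: A $\mathrm{CAT}(0)$ group is a group acting properly discontinuously and cocompactly by isometries on a proper geodesic $\mathrm{CAT}(0)$ metric space $(X,d)$, i.e. a geodesic metric space in which for every geodesic triangle $ABC$ with Euclidean comparison triangle $\bar A\bar B\bar C$ (same side lengths), every point $D$ on $BC$ with corresponding $\bar D$ on $\bar B\bar C$ ($d(B,D)=|\bar B\bar D|$) satisfies $d(A,D)\leq|\bar A\bar D|$. For a finite presentation $\langle S\mid R\rangle$ ($S$ finite, $S=S^{-1}$, $R\subset F_S$ finite), $d_S(a,b)=\min\{n:b^{-1}a=s_1\cdots s_n,\ s_i\in S\}$ is the word metric, and for $w\in F_S$ representing $e$, $\mathrm{Area}(w)$ is the smallest $k$ with $w=\prod_{i=1}^k v_ir_iv_i^{-1}$ in $F_S$, $v_i$ reduced words on $S$, $r_i^{\pm1}\in R$. *)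

From Stdlib Require Import Reals List Relations ClassicalEpsilon.
Import ListNotations.
Open Scope R_scope.

(* ---------- generic: least natural number satisfying P (0 if none) ---------- *)
Definition nat_min (P : nat -> Prop) : nat :=
  match excluded_middle_informative
          (exists n, P n /\ forall m, P m -> (n <= m)%nat) with
  | left H => proj1_sig (constructive_indefinite_description _ H)
  | right _ => 0%nat
  end.

Definition is_metric {X : Type} (d : X -> X -> R) : Prop :=
  (forall x y, 0 <= d x y) /\
  (forall x y, d x y = 0 <-> x = y) /\
  (forall x y, d x y = d y x) /\
  (forall x y z, d x z <= d x y + d y z).

Definition open_set {X : Type} (d : X -> X -> R) (U : X -> Prop) : Prop :=
  forall x, U x -> exists r, 0 < r /\ forall y, d x y < r -> U y.

Definition compact_set {X : Type} (d : X -> X -> R) (K : X -> Prop) : Prop :=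
  forall (I : Type) (U : I -> X -> Prop),
    (forall i, open_set d (U i)) ->
    (forall x, K x -> exists i, U i x) ->
    exists l : list I, forall x, K x -> exists i, In i l /\ U i x.

Definition proper_space {X : Type} (d : X -> X -> R) : Prop :=
  forall x r, compact_set d (fun y => d x y <= r).

Definition geodesic_from {X : Type} (d : X -> X -> R) (x y : X)
  (gam : R -> X) : Prop :=
  gam 0 = x /\ gam (d x y) = y /\
  forall s t, 0 <= s <= d x y -> 0 <= t <= d x y ->
    d (gam s) (gam t) = Rabs (s - t).

Definition geodesic_space {X : Type} (d : X -> X -> R) : Prop :=
  forall x y, exists gam, geodesic_from d x y gam.

Definition eucl (p q : R * R) : R :=
  sqrt ((fst p - fst q) ^ 2 + (snd p - snd q) ^ 2).

Definition on_segment (b c p : R * R) : Prop :=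
  exists l, 0 <= l <= 1 /\
    p = ((1 - l) * fst b + l * fst c, (1 - l) * snd b + l * snd c).

(* CAT(0) comparison inequality: for every geodesic triangle ABC (side BC
   given by the geodesic gam), every point D = gam t of BC and every
   Euclidean comparison triangle with comparison point Dbar on BbarCbar,
   d(A,D) <= |Abar Dbar|. *)
Definition CAT0 {X : Type} (d : X -> X -> R) : Prop :=
  forall (A B C : X) (gam : R -> X), geodesic_from d B C gam ->
  forall t, 0 <= t <= d B C ->
  forall Ab Bb Cb Db : R * R,
    eucl Ab Bb = d A B -> eucl Bb Cb = d B C -> eucl Ab Cb = d A C ->
    on_segment Bb Cb Db -> eucl Bb Db = d B (gam t) ->
    d A (gam t) <= eucl Ab Db.

Record is_group {G : Type} (mul : G -> G -> G) (one : G) (inv : G -> G) : Prop := {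
  grp_assoc : forall a b c, mul a (mul b c) = mul (mul a b) c;
  grp_mul1g : forall a, mul one a = a;
  grp_mulg1 : forall a, mul a one = a;
  grp_mulVg : forall a, mul (inv a) a = one;
  grp_mulgV : forall a, mul a (inv a) = one }.

Definition finite_set {G : Type} (P : G -> Prop) : Prop :=
  exists l : list G, forall g, P g -> In g l.

Record isometric_action {G X : Type} (mul : G -> G -> G) (one : G)
  (d : X -> X -> R) (act : G -> X -> X) : Prop := {
  act_one : forall x, act one x = x;
  act_mul : forall g h x, act (mul g h) x = act g (act h x);
  act_isom : forall g x y, d (act g x) (act g y) = d x y }.

Definition properly_discontinuous {G X : Type} (d : X -> X -> R)
  (act : G -> X -> X) : Prop :=
  forall K, compact_set d K ->
    finite_set (fun g => exists x, K x /\ K (act g x)).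

Definition cocompact {G X : Type} (d : X -> X -> R) (act : G -> X -> X) : Prop :=
  exists K, compact_set d K /\ forall x, exists g y, K y /\ x = act g y.

Section Free.
Context {G : Type} (mul : G -> G -> G) (one : G) (inv : G -> G).

(* a letter (s, false) is the generator s, (s, true) its formal inverse s^-1 *)
Definition letter := (G * bool)%type.
Definition flip (a : letter) : letter := (fst a, negb (snd a)).
Definition inv_word (w : list letter) : list letter := rev (map flip w).

Definition word_on (S : list G) (w : list letter) : Prop :=
  forall a, In a w -> In (fst a) S.

Definition reduced (w : list letter) : Prop :=
  forall p q a, w <> p ++ a :: flip a :: q.

Definition free_step (u v : list letter) : Prop :=
  exists p q a, u = p ++ a :: flip a :: q /\ v = p ++ q.

Definition free_eq : list letter -> list letter -> Prop :=
  clos_refl_sym_trans _ free_step.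

Definition eval_letter (a : letter) : G :=
  if snd a then inv (fst a) else fst a.
Definition eval_word (w : list letter) : G :=
  fold_right (fun a g => mul (eval_letter a) g) one w.

Definition prodG (l : list G) : G := fold_right mul one l.

Definition pos_word (l : list G) : list letter := map (fun s => (s, false)) l.

Definition conj_prod (l : list (list letter * list letter * bool)) : list letter :=
  concat (map (fun x : list letter * list letter * bool =>
                 let '(v, r, b) := x in
                 v ++ (if b then inv_word r else r) ++ inv_word v) l).

Definition area_witness (S : list G) (Rl : list (list letter))
  (w : list letter) (k : nat) : Prop :=
  exists l : list (list letter * list letter * bool),
    length l = k /\
    (forall v r b, In (v, r, b) l -> word_on S v /\ reduced v /\ In r Rl) /\
    free_eq w (conj_prod l).

Definition Area (S : list G) (Rl : list (list letter)) (w : list letter) : nat :=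
  nat_min (area_witness S Rl w).

Definition dS (S : list G) (a b : G) : nat :=
  nat_min (fun n => exists l : list G,
    length l = n /\ (forall s, In s l -> In s S) /\ prodG l = mul (inv b) a).

(* G = < S | R > via the natural map F_S -> G *)
Definition finite_presentation (S : list G) (Rl : list (list letter)) : Prop :=
  (forall s, In s S -> In (inv s) S) /\
  (forall r, In r Rl -> word_on S r /\ eval_word r = one) /\
  (forall g, exists l : list G, (forall s, In s l -> In s S) /\ prodG l = g) /\
  (forall u, word_on S u -> eval_word u = one ->
     exists k, area_witness S Rl u k).

Definition radial_sum (S : list G) (w : list G) : R :=
  fold_right Rplus 0
    (map (fun i => INR (dS S (prodG (firstn i w)) one) + 1)
         (seq 1 (length w))).
End Free.

From Stdlib Require Import Reals List.
From Stdlib Require Import Lra Lia Psatz Arith Classical ClassicalEpsilon Relations.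
Import ListNotations.
Open Scope R_scope.

(* Choose rho such that every point of X is within rho of the orbit of x0,
   and let S be the (finite) set of group elements moving x0 by at most
   2 rho + 1.  Walking at unit speed along the geodesic from x0 to g x0 and
   picking an orbit point within rho of its position at each integer time
   gives a path in S from 1 to g of length about d(x0, g x0) + 2, hence
   O(d_S(g, 1)).  By the convexity of the CAT(0) metric, the geodesics to
   g x0 and to g s x0 (s in S) stay 2 d(g x0, g s x0)-close, so the paths of
   g and g s are joined by rungs of bounded length: the ladder between them
   is tiled by loops of bounded length, which are taken as the relators.
   Filling a loop w ladder by ladder costs at most sum_i C (d_S(w(i), 1) + 1). *)

Lemma nat_min_spec (P : nat -> Prop) :
  (exists n, P n) -> P (nat_min P) /\ forall m, P m -> (nat_min P <= m)%nat.
Proof.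
  intros [n Hn].
  assert (Hleast : exists n, P n /\ forall m, P m -> (n <= m)%nat).
  { induction n as [n IH] using lt_wf_ind.
    destruct (classic (exists k, (k < n)%nat /\ P k)) as [[k [Hk Pk]]|Hnone].
    - exact (IH k Hk Pk).
    - exists n. split; [exact Hn|]. intros m Pm.
      destruct (le_lt_dec n m); [assumption|].
      exfalso. apply Hnone. exists m. auto. }
  unfold nat_min. destruct excluded_middle_informative as [H|H]; [|contradiction].
  exact (proj2_sig (constructive_indefinite_description _ H)).
Qed.

Section FreeGroup.
Context {G : Type} (mul : G -> G -> G) (one : G) (inv : G -> G)
  (HG : is_group mul one inv).

Local Notation letter := (G * bool)%type.
Local Notation word := (list letter).
Local Notation eval := (eval_word mul one inv).
Local Notation prod := (prodG mul one).

Lemma mulgA a b c : mul a (mul b c) = mul (mul a b) c. Proof. apply HG. Qed.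
Lemma mul1g a : mul one a = a. Proof. apply HG. Qed.
Lemma mulg1 a : mul a one = a. Proof. apply HG. Qed.
Lemma mulVg a : mul (inv a) a = one. Proof. apply HG. Qed.
Lemma mulgV a : mul a (inv a) = one. Proof. apply HG. Qed.

Lemma mulKg a b : mul (inv a) (mul a b) = b.
Proof. rewrite mulgA, mulVg, mul1g. reflexivity. Qed.

Lemma mulVKg a b : mul a (mul (inv a) b) = b.
Proof. rewrite mulgA, mulgV, mul1g. reflexivity. Qed.

Lemma invg_unique a b : mul a b = one -> inv b = a.
Proof. intro H. rewrite <- (mul1g (inv b)), <- H, <- mulgA, mulgV, mulg1. reflexivity. Qed.

Lemma invgK a : inv (inv a) = a.
Proof. apply invg_unique, mulgV. Qed.

Lemma invMg a b : inv (mul a b) = mul (inv b) (inv a).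
Proof. apply invg_unique. rewrite <- mulgA, mulKg, mulVg. reflexivity. Qed.

Lemma invg1 : inv one = one.
Proof. apply invg_unique, mul1g. Qed.

Lemma flipK (a : letter) : flip (flip a) = a.
Proof. destruct a as [s b]. unfold flip. simpl. rewrite Bool.negb_involutive. reflexivity. Qed.

Lemma inv_word_app (u v : word) : inv_word (u ++ v) = inv_word v ++ inv_word u.
Proof. unfold inv_word. rewrite map_app, rev_app_distr. reflexivity. Qed.

Lemma inv_word_cons (a : letter) (u : word) : inv_word (a :: u) = inv_word u ++ [flip a].
Proof. reflexivity. Qed.

Lemma inv_wordK (u : word) : inv_word (inv_word u) = u.
Proof. unfold inv_word. rewrite map_rev, rev_involutive, map_map.
  erewrite map_ext; [apply map_id|]. apply flipK. Qed.

Lemma inv_word_length (u : word) : length (inv_word u) = length u.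
Proof. unfold inv_word. rewrite length_rev, length_map. reflexivity. Qed.

Lemma word_on_app S (u v : word) : word_on S u -> word_on S v -> word_on S (u ++ v).
Proof. intros Hu Hv a Ha. apply in_app_or in Ha. destruct Ha; auto. Qed.

Lemma word_on_inv_word S (u : word) : word_on S u -> word_on S (inv_word u).
Proof.
  intros Hu a Ha. unfold inv_word in Ha. apply in_rev, in_map_iff in Ha.
  destruct Ha as [b [<- Hb]]. exact (Hu b Hb).
Qed.

Lemma word_on_nil S : word_on S (@nil letter).
Proof. intros a []. Qed.

Lemma word_on_pos_word S (l : list G) :
  (forall s, In s l -> In s S) -> word_on S (pos_word l).
Proof. intros H a Ha. apply in_map_iff in Ha. destruct Ha as [s [<- Hs]]. exact (H s Hs). Qed.

Lemma eval_app (u v : word) : eval (u ++ v) = mul (eval u) (eval v).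
Proof.
  induction u as [|a u IH]; simpl; [rewrite mul1g; reflexivity|].
  rewrite IH, mulgA. reflexivity.
Qed.

Lemma eval_flip (a : letter) : eval_letter inv (flip a) = inv (eval_letter inv a).
Proof. destruct a as [s []]; unfold eval_letter, flip; simpl; [rewrite invgK|]; reflexivity. Qed.

Lemma eval_inv_word (u : word) : eval (inv_word u) = inv (eval u).
Proof.
  induction u as [|a u IH]; [simpl; rewrite invg1; reflexivity|].
  rewrite inv_word_cons.
  rewrite eval_app, IH. simpl. rewrite mulg1, eval_flip, invMg. reflexivity.
Qed.

Lemma prodG_app (u v : list G) : prod (u ++ v) = mul (prod u) (prod v).
Proof.
  induction u as [|a u IH]; simpl; [rewrite mul1g; reflexivity|].
  rewrite IH, mulgA. reflexivity.
Qed.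

Lemma eval_pos_word (l : list G) : eval (pos_word l) = prod l.
Proof. induction l as [|a l IH]; simpl; [|rewrite IH]; reflexivity. Qed.

Lemma free_eq_map (f : word -> word) :
  (forall u v, free_step u v -> free_step (f u) (f v)) ->
  forall u v, free_eq u v -> free_eq (f u) (f v).
Proof.
  intros Hf u v. induction 1; [apply rst_step; auto|apply rst_refl|now apply rst_sym|].
  eapply rst_trans; eassumption.
Qed.

Lemma free_eq_app_l (p u v : word) : free_eq u v -> free_eq (p ++ u) (p ++ v).
Proof.
  apply free_eq_map. intros ? ? (p' & q & a & -> & ->).
  exists (p ++ p'), q, a. rewrite <- !app_assoc. split; reflexivity.
Qed.

Lemma free_eq_app_r (q u v : word) : free_eq u v -> free_eq (u ++ q) (v ++ q).
Proof.
  apply (free_eq_map (fun u => u ++ q)). intros ? ? (p' & q' & a & -> & ->).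
  exists p', (q' ++ q), a. rewrite <- !app_assoc. split; reflexivity.
Qed.

Lemma free_eq_app (u u' v v' : word) :
  free_eq u u' -> free_eq v v' -> free_eq (u ++ v) (u' ++ v').
Proof. intros Hu Hv. eapply rst_trans; [apply free_eq_app_r, Hu|apply free_eq_app_l, Hv]. Qed.

Lemma free_eq_inv_word (u v : word) : free_eq u v -> free_eq (inv_word u) (inv_word v).
Proof.
  apply free_eq_map. intros ? ? (p' & q & a & -> & ->).
  exists (inv_word q), (inv_word p'), a.
  rewrite !inv_word_app. rewrite !inv_word_cons.
  rewrite flipK, <- !app_assoc. split; reflexivity.
Qed.

Lemma free_eq_cancel (u v : word) : free_eq (u ++ inv_word u ++ v) v.
Proof.
  revert v. induction u as [|a u IH]; intro v; [apply rst_refl|].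
  rewrite inv_word_cons.
  rewrite <- app_assoc. simpl.
  eapply rst_trans; [apply (free_eq_app_l [a]), IH|].
  apply rst_step. exists [], v, a. split; reflexivity.
Qed.

Lemma free_eq_cancel_inv (u v : word) : free_eq (inv_word u ++ u ++ v) v.
Proof. rewrite <- (inv_wordK u) at 2. apply free_eq_cancel. Qed.

Lemma free_eq_conj (p p' u : word) :
  free_eq p p' -> free_eq (p ++ u ++ inv_word p) (p' ++ u ++ inv_word p').
Proof. intro H. apply free_eq_app; [exact H|]. apply free_eq_app_l, free_eq_inv_word, H. Qed.

Lemma free_eq_conj_app (p u v : word) :
  free_eq (p ++ (u ++ v) ++ inv_word p) ((p ++ u ++ inv_word p) ++ (p ++ v ++ inv_word p)).
Proof.
  rewrite <- !app_assoc. apply free_eq_app_l, free_eq_app_l.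
  apply rst_sym, free_eq_cancel_inv.
Qed.

Fixpoint reduce (w : word) : word :=
  match w with
  | [] => []
  | a :: w' =>
      match reduce w' with
      | b :: w'' => if excluded_middle_informative (b = flip a) then w'' else a :: b :: w''
      | [] => [a]
      end
  end.

Lemma free_eq_reduce (w : word) : free_eq w (reduce w).
Proof.
  induction w as [|a w IH]; simpl; [apply rst_refl|].
  apply rst_trans with (a :: reduce w); [apply (free_eq_app_l [a]), IH|].
  destruct (reduce w) as [|b w'']; [apply rst_refl|].
  destruct excluded_middle_informative as [->|]; [|apply rst_refl].
  apply rst_step. exists [], w'', a. split; reflexivity.
Qed.

Lemma reduce_incl (w : word) a : In a (reduce w) -> In a w.
Proof.
  induction w as [|b w IH]; simpl; [auto|].
  destruct (reduce w) as [|c w'']; [intros [H|[]]; auto|].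
  destruct excluded_middle_informative; simpl in *; intuition.
Qed.

Lemma reduced_cons a (w : word) :
  reduced w -> (forall b w', w = b :: w' -> b <> flip a) -> reduced (a :: w).
Proof.
  intros Hr Hb p q x H. destruct p as [|y p]; simpl in H.
  - injection H as -> ->. exact (Hb (flip x) q eq_refl eq_refl).
  - injection H as -> H. exact (Hr p q x H).
Qed.

Lemma reduced_reduce (w : word) : reduced (reduce w).
Proof.
  induction w as [|a w IH]; simpl; [intros [] ? ? ?; discriminate|].
  destruct (reduce w) as [|b w''].
  - apply reduced_cons; [exact IH|discriminate].
  - destruct excluded_middle_informative as [E|E].
    + intros p q x H. apply (IH (b :: p) q x). rewrite H. reflexivity.
    + apply reduced_cons; [exact IH|]. intros b' w' H. injection H as -> ->. exact E.
Qed.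

Definition area_at_most (S : list G) (Rl : list word) (u : word) (k : nat) : Prop :=
  exists l : list (word * word * bool),
    (length l <= k)%nat /\
    (forall v r b, In (v, r, b) l -> word_on S v /\ reduced v /\ In r Rl) /\
    free_eq u (conj_prod l).

Section Fillings.
Variables (S : list G) (Rl : list word).

Lemma area_at_most_witness u k : area_at_most S Rl u k -> exists n, area_witness S Rl u n.
Proof. intros (l & _ & Hl & Hu). exists (length l), l. auto. Qed.

Lemma Area_le u k : area_at_most S Rl u k -> (Area S Rl u <= k)%nat.
Proof.
  intros Hk. pose proof (nat_min_spec _ (area_at_most_witness u k Hk)) as [_ Hmin].
  destruct Hk as (l & Hlen & Hl & Hu). unfold Area.
  apply Nat.le_trans with (length l); [apply Hmin; exists l; auto|exact Hlen].
Qed.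

Lemma area_at_most_nil : area_at_most S Rl [] 0.
Proof. exists []. split; [simpl; lia|split; [intros ? ? ? []|apply rst_refl]]. Qed.

Lemma area_at_most_free_eq u v k :
  free_eq u v -> area_at_most S Rl u k -> area_at_most S Rl v k.
Proof.
  intros Huv (l & Hlen & Hl & Hu). exists l. split; [exact Hlen|split; [exact Hl|]].
  eapply rst_trans; [apply rst_sym, Huv|exact Hu].
Qed.

Lemma area_at_most_app u v k m :
  area_at_most S Rl u k -> area_at_most S Rl v m -> area_at_most S Rl (u ++ v) (k + m).
Proof.
  intros (l1 & A1 & B1 & C1) (l2 & A2 & B2 & C2). exists (l1 ++ l2). split; [|split].
  - rewrite length_app. lia.
  - intros v' r b H. apply in_app_or in H. destruct H; eauto.
  - unfold conj_prod. rewrite map_app, concat_app. apply free_eq_app; assumption.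
Qed.

Lemma area_at_most_relator r : In r Rl -> area_at_most S Rl r 1.
Proof.
  intro Hr. exists [([], r, false)]. split; [simpl; lia|split].
  - intros v r' b [E|[]]. injection E as <- <- <-.
    split; [apply word_on_nil|split; [intros [] ? ? ?; discriminate|exact Hr]].
  - unfold conj_prod. simpl. rewrite !app_nil_r. apply rst_refl.
Qed.

Lemma area_at_most_conj p u k :
  word_on S p -> area_at_most S Rl u k -> area_at_most S Rl (p ++ u ++ inv_word p) k.
Proof.
  intros Hp (l & A & B & C).
  set (conj_by := fun x : word * word * bool => let '(v, r, b) := x in (reduce (p ++ v), r, b)).
  exists (map conj_by l). split; [|split].
  - rewrite length_map. exact A.
  - intros v r b H. apply in_map_iff in H. destruct H as [[[v0 r0] b0] [E Hin]].
    injection E as <- <- <-. destruct (B _ _ _ Hin) as (Hv0 & _ & Hr0).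
    split; [|split; [apply reduced_reduce|exact Hr0]].
    intros a Ha. apply reduce_incl, in_app_or in Ha. destruct Ha; auto.
  - apply rst_trans with (p ++ conj_prod l ++ inv_word p);
      [apply free_eq_app_l, free_eq_app_r, C|].
    clear A B C. induction l as [|[[v r] b] l IH].
    { change (free_eq (p ++ [] ++ inv_word p) []).
      rewrite <- (app_nil_r (inv_word p)). apply free_eq_cancel. }
    eapply rst_trans; [apply free_eq_conj_app|]. apply free_eq_app; [|exact IH].
    simpl. set (R := if b then inv_word r else r).
    eapply rst_trans; [|apply free_eq_conj, free_eq_reduce].
    rewrite inv_word_app, <- !app_assoc. apply rst_refl.
Qed.

End Fillings.

Section ShortRelators.
Variable gens : list G.

Definition gen_letters : list letter := flat_map (fun s => [(s, false); (s, true)]) gens.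

Fixpoint words_upto (n : nat) : list word :=
  match n with
  | O => [[]]
  | S n => [] :: flat_map (fun a => map (cons a) (words_upto n)) gen_letters
  end.

Lemma In_words_upto n u : word_on gens u -> (length u <= n)%nat -> In u (words_upto n).
Proof.
  revert u. induction n as [|n IH]; intros [|a u] Hu Hlen; simpl in *; auto; [lia|].
  right. apply in_flat_map. exists a. split.
  - apply in_flat_map. exists (fst a). split; [apply Hu; left; reflexivity|].
    destruct a as [s []]; simpl; auto.
  - apply in_map, IH; [intros b Hb; apply Hu; right; exact Hb|lia].
Qed.

Lemma words_upto_on n u : In u (words_upto n) -> word_on gens u.
Proof.
  revert u. induction n as [|n IH]; intros u Hu; simpl in Hu.
  - destruct Hu as [<-|[]]. apply word_on_nil.
  - destruct Hu as [<-|Hu]; [apply word_on_nil|].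
    apply in_flat_map in Hu. destruct Hu as [a [Ha Hu]].
    apply in_map_iff in Hu. destruct Hu as [u' [<- Hu']].
    intros b [<-|Hb]; [|exact (IH u' Hu' b Hb)].
    apply in_flat_map in Ha. destruct Ha as [s [Hs [<-|[<-|[]]]]]; exact Hs.
Qed.

Definition short_relators (n : nat) : list word :=
  filter (fun u => if excluded_middle_informative (eval u = one) then true else false)
    (words_upto n).

Lemma short_relators_spec n u : In u (short_relators n) -> word_on gens u /\ eval u = one.
Proof.
  unfold short_relators. rewrite filter_In. intros [Hu Hone].
  split; [exact (words_upto_on n u Hu)|].
  destruct excluded_middle_informative; [assumption|discriminate].
Qed.

Lemma In_short_relators n u :
  word_on gens u -> (length u <= n)%nat -> eval u = one -> In u (short_relators n).
Proof.
  intros Hu Hlen Hone. unfold short_relators. apply filter_In.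
  split; [apply In_words_upto; assumption|].
  destruct excluded_middle_informative; [reflexivity|contradiction].
Qed.

End ShortRelators.

Section Combing.
Variables (gens : list G) (Rl : list word) (K : nat)
  (path : G -> nat -> G) (len : G -> nat) (spell : G -> list G).

Hypothesis gens_inv : forall s, In s gens -> In (inv s) gens.
Hypothesis path_0 : forall g, path g 0%nat = one.
Hypothesis path_end : forall g k, (len g <= k)%nat -> path g k = g.
Hypothesis len_one : len one = 0%nat.
Hypothesis path_step : forall g k, In (mul (inv (path g k)) (path g (S k))) gens.
Hypothesis spell_on : forall h s, In s (spell h) -> In s gens.
Hypothesis prod_spell : forall h, prod (spell h) = h.
Hypothesis spell_one : spell one = [].
Hypothesis rung_short : forall g s k, In s gens ->
  (length (spell (mul (inv (path g k)) (path (mul g s) k))) <= K)%nat.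
Hypothesis short_loops_in_Rl : forall u, word_on gens u -> (length u <= 2 * K + 2)%nat ->
  eval u = one -> In u Rl.

Definition step_word g k : word :=
  if Nat.ltb k (len g) then [(mul (inv (path g k)) (path g (S k)), false)] else [].
Definition path_word g k : word := concat (map (step_word g) (seq 0 k)).
Definition rung_word g g' k : word := pos_word (spell (mul (inv (path g k)) (path g' k))).

Lemma path_word_S g k : path_word g (S k) = path_word g k ++ step_word g k.
Proof. unfold path_word. rewrite seq_S, map_app, concat_app. simpl. rewrite app_nil_r. reflexivity. Qed.

Lemma path_word_end g k : (len g <= k)%nat -> path_word g k = path_word g (len g).
Proof.
  intro Hk. induction Hk as [|k Hk IH]; [reflexivity|].
  rewrite path_word_S, IH. unfold step_word.
  destruct (Nat.ltb_spec k (len g)); [lia|apply app_nil_r].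
Qed.

Lemma eval_step_word g k : eval (step_word g k) = mul (inv (path g k)) (path g (S k)).
Proof.
  unfold step_word. destruct (Nat.ltb_spec k (len g)); simpl; [apply mulg1|].
  rewrite !path_end by lia. symmetry. apply mulVg.
Qed.

Lemma eval_rung_word g g' k : eval (rung_word g g' k) = mul (inv (path g k)) (path g' k).
Proof. unfold rung_word. rewrite eval_pos_word. apply prod_spell. Qed.

Lemma step_word_on g k : word_on gens (step_word g k).
Proof.
  unfold step_word. destruct (Nat.ltb k (len g)); [|apply word_on_nil].
  intros a [<-|[]]. apply path_step.
Qed.

Lemma step_word_length g k : (length (step_word g k) <= 1)%nat.
Proof. unfold step_word. destruct (Nat.ltb k (len g)); simpl; lia. Qed.

Lemma path_word_on g k : word_on gens (path_word g k).
Proof.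
  induction k as [|k IH]; [apply word_on_nil|].
  rewrite path_word_S. apply word_on_app; [exact IH|apply step_word_on].
Qed.

Lemma rung_word_on g g' k : word_on gens (rung_word g g' k).
Proof. apply word_on_pos_word, spell_on. Qed.

Lemma eval_letter_on (a : letter) : In (fst a) gens -> In (eval_letter inv a) gens.
Proof. destruct a as [s []]; unfold eval_letter; simpl; auto. Qed.

Lemma rung_word_length g a k : In (fst a) gens ->
  (length (rung_word g (mul g (eval_letter inv a)) k) <= K)%nat.
Proof. intro Ha. unfold rung_word, pos_word. rewrite length_map. apply rung_short, eval_letter_on, Ha. Qed.

Lemma area_at_most_short_relator u :
  word_on gens u -> (length u <= 2 * K + 2)%nat -> eval u = one -> area_at_most gens Rl u 1.
Proof. intros. apply area_at_most_relator, short_loops_in_Rl; assumption. Qed.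

(* The region between the combing lines of g and g a is tiled by the
   short loops rung(k)^-1 step_g(k) rung(k+1) step_ga(k)^-1. *)
Lemma ladder g a k : In (fst a) gens ->
  area_at_most gens Rl (path_word g k ++ rung_word g (mul g (eval_letter inv a)) k ++
                        inv_word (path_word (mul g (eval_letter inv a)) k)) k.
Proof.
  intros Ha. set (g' := mul g (eval_letter inv a)). induction k as [|k IH].
  - unfold rung_word. simpl. rewrite !path_0, mulVg, spell_one. apply area_at_most_nil.
  - set (cell := inv_word (rung_word g g' k) ++ step_word g k ++ rung_word g g' (S k) ++
                 inv_word (step_word g' k)).
    assert (Hcell : area_at_most gens Rl cell 1).
    { apply area_at_most_short_relator.
      - unfold cell. repeat apply word_on_app; try apply word_on_inv_word;
          auto using rung_word_on, step_word_on.
      - unfold cell. rewrite !length_app, !inv_word_length.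
        pose proof (step_word_length g k). pose proof (step_word_length g' k).
        pose proof (rung_word_length g a k Ha) as Hr. pose proof (rung_word_length g a (S k) Ha) as Hr1.
        fold g' in Hr, Hr1. lia.
      - unfold cell. rewrite !eval_app, !eval_inv_word, !eval_step_word, !eval_rung_word.
        rewrite !invMg, !invgK, <- !mulgA, !mulVKg. apply mulVg. }
    pose proof (area_at_most_app _ _ _ _ _ _ IH
                  (area_at_most_conj _ _ _ _ _ (path_word_on g' k) Hcell)) as H.
    rewrite Nat.add_1_r in H. eapply area_at_most_free_eq; [|exact H].
    rewrite !path_word_S, !inv_word_app. unfold cell. rewrite <- !app_assoc.
    apply free_eq_app_l. eapply rst_trans; [apply free_eq_app_l, free_eq_cancel_inv|].
    apply free_eq_cancel.
Qed.

Definition combing_word g : word := path_word g (len g).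

Lemma combing_word_one : combing_word one = [].
Proof. unfold combing_word. rewrite len_one. reflexivity. Qed.

Definition ladder_cost g (a : letter) : nat :=
  (Nat.max (len g) (len (mul g (eval_letter inv a))) + 1)%nat.

Lemma ladder_full g a : In (fst a) gens ->
  area_at_most gens Rl
    (combing_word g ++ [a] ++ inv_word (combing_word (mul g (eval_letter inv a))))
    (ladder_cost g a).
Proof.
  intros Ha. set (g' := mul g (eval_letter inv a)). set (m := Nat.max (len g) (len g')).
  pose proof (ladder g a m Ha) as Hladder. fold g' in Hladder.
  rewrite !(path_word_end _ m) in Hladder by lia. fold (combing_word g) (combing_word g') in Hladder.
  set (cap := inv_word (rung_word g g' m) ++ [a]).
  assert (Hcap : area_at_most gens Rl cap 1).
  { apply area_at_most_short_relator.
    - apply word_on_app; [apply word_on_inv_word, rung_word_on|].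
      intros b [<-|[]]. exact Ha.
    - unfold cap. rewrite length_app, inv_word_length.
      pose proof (rung_word_length g a m Ha) as Hr. fold g' in Hr. simpl. lia.
    - unfold cap. rewrite eval_app, eval_inv_word, eval_rung_word, !path_end by lia.
      simpl. rewrite mulg1, invMg, invgK, <- mulgA. apply mulVg. }
  pose proof (area_at_most_app _ _ _ _ _ _ Hladder
                (area_at_most_conj _ _ _ _ _ (path_word_on g' (len g')) Hcap)) as H.
  fold (combing_word g') in H.
  eapply area_at_most_free_eq; [|exact H].
  unfold cap. rewrite <- !app_assoc. apply free_eq_app_l.
  eapply rst_trans; [apply free_eq_app_l, free_eq_cancel_inv|]. apply free_eq_cancel.
Qed.

Fixpoint loop_cost g (u : word) : nat :=
  match u with
  | [] => 0%nat
  | a :: u' => (ladder_cost g a + loop_cost (mul g (eval_letter inv a)) u')%nat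
  end.

Lemma area_at_most_extend u : forall pre k, word_on gens u ->
  area_at_most gens Rl (pre ++ inv_word (combing_word (eval pre))) k ->
  area_at_most gens Rl (pre ++ u ++ inv_word (combing_word (eval (pre ++ u))))
    (k + loop_cost (eval pre) u).
Proof.
  induction u as [|a u IH]; intros pre k Hu Hpre.
  - rewrite !app_nil_r, Nat.add_0_r. exact Hpre.
  - assert (Ha : In (fst a) gens) by (apply Hu; left; reflexivity).
    assert (Hu' : word_on gens u) by (intros b Hb; apply Hu; right; exact Hb).
    assert (Hpre_a : eval (pre ++ [a]) = mul (eval pre) (eval_letter inv a))
      by (rewrite eval_app; simpl; rewrite mulg1; reflexivity).
    assert (Hstep : area_at_most gens Rl ((pre ++ [a]) ++ inv_word (combing_word (eval (pre ++ [a]))))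
                      (k + ladder_cost (eval pre) a)).
    { eapply area_at_most_free_eq;
        [|exact (area_at_most_app _ _ _ _ _ _ Hpre (ladder_full (eval pre) a Ha))].
      rewrite Hpre_a, <- !app_assoc. apply free_eq_app_l, free_eq_cancel_inv. }
    pose proof (IH (pre ++ [a]) _ Hu' Hstep) as H.
    rewrite Hpre_a, <- !app_assoc in H. simpl in H. simpl loop_cost. rewrite Nat.add_assoc. exact H.
Qed.

Lemma area_at_most_loop u : word_on gens u -> eval u = one ->
  area_at_most gens Rl u (loop_cost one u).
Proof.
  intros Hu Hone. pose proof (area_at_most_extend u [] 0%nat Hu) as H.
  simpl in H. rewrite Hone, combing_word_one, app_nil_r in H. apply H.
  apply area_at_most_nil.
Qed.

Lemma loop_cost_pos_word_le (C : R) (f : G -> R) :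
  (forall g s, In s gens -> INR (ladder_cost g (s, false)) <= C * f (mul g s)) ->
  forall w g, (forall s, In s w -> In s gens) ->
  INR (loop_cost g (pos_word w)) <=
  C * fold_right Rplus 0 (map (fun i => f (mul g (prod (firstn i w)))) (seq 1 (length w))).
Proof.
  intros Hcost w. induction w as [|s w IH]; intros g Hw; simpl; [lra|].
  rewrite <- seq_shift, map_map, plus_INR, Rmult_plus_distr_l. simpl.
  rewrite mulg1. apply Rplus_le_compat; [apply Hcost, Hw; left; reflexivity|].
  change (eval_letter inv (s, false)) with s.
  erewrite map_ext; [apply IH; intros t Ht; apply Hw; right; exact Ht|].
  intro i. rewrite mulgA. reflexivity.
Qed.

End Combing.
End FreeGroup.

Lemma sqrt_pow2_eq (x y : R) : 0 <= y -> x = y ^ 2 -> sqrt x = y.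
Proof. intros Hy ->. apply sqrt_pow2, Hy. Qed.

(* The comparison triangle of side lengths a = |BC|, b = |AC|, c = |AB|:
   B = (0,0), C = (a,0), A = (u,v) with u the projection of A on BC. *)
Lemma comparison_triangle (a b c t : R) :
  0 < a -> 0 <= b -> 0 <= c -> b <= c + a -> a <= c + b -> c <= b + a -> 0 <= t <= a ->
  exists Ab : R * R,
    eucl Ab (0, 0) = c /\ eucl Ab (a, 0) = b /\
    eucl Ab (t, 0) ^ 2 = c ^ 2 + t ^ 2 - t * (a ^ 2 + c ^ 2 - b ^ 2) / a.
Proof.
  intros Ha Hb Hc Tb Ta Tc Ht.
  set (u := (a ^ 2 + c ^ 2 - b ^ 2) / (2 * a)).
  assert (Hu : 2 * a * u = a ^ 2 + c ^ 2 - b ^ 2) by (unfold u; field; lra).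
  assert (Hu_le : u <= c) by nra.
  assert (Hu_ge : - c <= u) by nra.
  assert (Hv0 : 0 <= c ^ 2 - u ^ 2) by nra.
  set (v := sqrt (c ^ 2 - u ^ 2)).
  assert (Hv : v ^ 2 = c ^ 2 - u ^ 2) by (unfold v; rewrite <- Rsqr_pow2; apply Rsqr_sqrt, Hv0).
  exists (u, v). unfold eucl; cbn [fst snd]. split; [|split].
  - apply sqrt_pow2_eq; [exact Hc|nra].
  - apply sqrt_pow2_eq; [exact Hb|nra].
  - rewrite <- Rsqr_pow2, Rsqr_sqrt by (apply Rplus_le_le_0_compat; apply pow2_ge_0).
    replace (t * (a ^ 2 + c ^ 2 - b ^ 2) / a) with (2 * u * t) by (rewrite <- Hu; field; lra).
    nra.
Qed.

Section CAT0.
Context {X : Type} (d : X -> X -> R) (Hm : is_metric d) (Hcat : CAT0 d).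

Lemma metric_ge0 x y : 0 <= d x y. Proof. apply Hm. Qed.
Lemma metric_xx x : d x x = 0. Proof. apply Hm. reflexivity. Qed.
Lemma metric_sym x y : d x y = d y x. Proof. apply Hm. Qed.
Lemma metric_triangle x y z : d x z <= d x y + d y z. Proof. apply Hm. Qed.

Lemma geodesic_dist_start x y gam s :
  geodesic_from d x y gam -> 0 <= s <= d x y -> d x (gam s) = s.
Proof.
  intros (H0 & _ & Hgam) Hs. pose proof (metric_ge0 x y).
  rewrite <- H0 at 1. rewrite Hgam by lra. rewrite Rabs_left1 by lra. lra.
Qed.

Lemma cat0_dist_sq A B C gam t : geodesic_from d B C gam -> 0 < d B C -> 0 <= t <= d B C ->
  d A (gam t) ^ 2 <= d A B ^ 2 + t ^ 2 - t * (d B C ^ 2 + d A B ^ 2 - d A C ^ 2) / d B C.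
Proof.
  intros Hg Ha Ht.
  pose proof (metric_triangle A B C). pose proof (metric_triangle B A C).
  pose proof (metric_triangle A C B). rewrite (metric_sym B A) in *. rewrite (metric_sym C B) in *.
  destruct (comparison_triangle (d B C) (d A C) (d A B) t) as (Ab & HAB & HAC & HAD);
    auto using metric_ge0; try lra.
  assert (Hseg : on_segment (0, 0) (d B C, 0) (t, 0)).
  { exists (t / d B C). assert (Ht' : t = t / d B C * d B C) by (field; lra).
    split; [split; nra|]. simpl. f_equal; field; lra. }
  assert (HBD : eucl (0, 0) (t, 0) = d B (gam t)).
  { rewrite (geodesic_dist_start B C gam t Hg Ht). unfold eucl. simpl.
    apply sqrt_pow2_eq; [lra|ring]. }
  assert (HBC : eucl (0, 0) (d B C, 0) = d B C).
  { unfold eucl. simpl. apply sqrt_pow2_eq; [lra|ring]. }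
  pose proof (Hcat A B C gam Hg t Ht Ab (0, 0) (d B C, 0) (t, 0) HAB HBC HAC Hseg HBD) as Hcmp.
  rewrite <- HAD. apply pow_incr. split; [apply metric_ge0|exact Hcmp].
Qed.

Lemma geodesic_dist x y gam s t : geodesic_from d x y gam ->
  0 <= s <= d x y -> 0 <= t <= d x y -> d (gam s) (gam t) = Rabs (s - t).
Proof. intros (_ & _ & Hgam). apply Hgam. Qed.

Lemma cat0_convexity x y y' gam gam' lam :
  geodesic_from d x y gam -> geodesic_from d x y' gam' -> 0 <= lam <= 1 ->
  d (gam (lam * d x y)) (gam' (lam * d x y')) <= lam * d y y'.
Proof.
  intros Hg Hg' Hlam.
  set (L := d x y) in *. set (L' := d x y'). set (del := d y y').
  assert (HL : 0 <= L) by apply metric_ge0. assert (HL' : 0 <= L') by apply metric_ge0.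
  assert (Hdel : 0 <= del) by apply metric_ge0.
  assert (T1 : L' <= L + del) by apply metric_triangle.
  assert (T2 : L <= L' + del)
    by (unfold L, L', del; pose proof (metric_triangle x y' y); rewrite (metric_sym y' y) in *; lra).
  assert (Hg0 : gam 0 = x) by apply Hg. assert (Hg0' : gam' 0 = x) by apply Hg'.
  destruct (Req_dec L 0) as [E|HL0].
  { rewrite E, Rmult_0_r, Hg0, (geodesic_dist_start x y' gam'); [nra|exact Hg'|fold L'; split; nra]. }
  destruct (Req_dec L' 0) as [E'|HL0'].
  { rewrite E', Rmult_0_r, Hg0', metric_sym, (geodesic_dist_start x y gam); [nra|exact Hg|fold L; split; nra]. }
  set (t := lam * L). set (s := lam * L').
  assert (Ht : 0 <= t <= L) by (unfold t; split; nra).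
  assert (Hs : 0 <= s <= L') by (unfold s; split; nra).
  assert (Hxt : d x (gam t) = t) by exact (geodesic_dist_start x y gam t Hg Ht).
  pose proof (cat0_dist_sq y' x y gam t Hg ltac:(fold L; lra) Ht) as C1.
  pose proof (cat0_dist_sq (gam t) x y' gam' s Hg' ltac:(fold L'; lra) Hs) as C2.
  fold L L' in C1, C2. rewrite (metric_sym y' x), (metric_sym y' y) in C1. fold L' del in C1.
  rewrite (metric_sym (gam t) x), Hxt, (metric_sym (gam t) y') in C2.
  set (e := d y' (gam t)) in *.
  replace (t * (L ^ 2 + L' ^ 2 - del ^ 2) / L) with (lam * (L ^ 2 + L' ^ 2 - del ^ 2)) in C1
    by (unfold t; field; lra).
  replace (s * (L' ^ 2 + t ^ 2 - e ^ 2) / L') with (lam * (L' ^ 2 + t ^ 2 - e ^ 2)) in C2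
    by (unfold s; field; lra).
  assert (C3 : lam * e ^ 2 <= lam * (L' ^ 2 + t ^ 2 - lam * (L ^ 2 + L' ^ 2 - del ^ 2)))
    by (apply Rmult_le_compat_l; lra).
  apply Rsqr_incr_0_var; [|nra]. rewrite !Rsqr_pow2. unfold t, s in *. nra.
Qed.

Lemma Rmin_lipschitz (s t L : R) : Rabs (Rmin s L - Rmin t L) <= Rabs (s - t).
Proof. unfold Rmin. destruct (Rle_dec s L), (Rle_dec t L); unfold Rabs; repeat destruct Rcase_abs; lra. Qed.

Lemma Rmin_scale_dist (lam M L : R) : 0 <= lam <= 1 -> 0 <= L <= M ->
  Rabs (Rmin (lam * M) L - lam * L) <= M - L.
Proof. intros Hlam HL. unfold Rmin. destruct (Rle_dec (lam * M) L); rewrite Rabs_right; nra. Qed.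

(* Reparametrize both geodesics proportionally to the longer one and use
   convexity; the clamping costs at most |d x y - d x y'| <= d y y'. *)
Lemma cat0_fellow_travel x y y' gam gam' t :
  geodesic_from d x y gam -> geodesic_from d x y' gam' -> 0 <= t ->
  d (gam (Rmin t (d x y))) (gam' (Rmin t (d x y'))) <= 2 * d y y'.
Proof.
  intros Hg Hg' Ht.
  set (L := d x y) in *. set (L' := d x y'). set (del := d y y').
  assert (HL : 0 <= L) by apply metric_ge0. assert (HL' : 0 <= L') by apply metric_ge0.
  assert (Hdel : 0 <= del) by apply metric_ge0.
  assert (T1 : L' <= L + del) by apply metric_triangle.
  assert (T2 : L <= L' + del)
    by (unfold L, L', del; pose proof (metric_triangle x y' y); rewrite (metric_sym y' y) in *; lra).
  set (M := Rmax L L').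
  assert (HM : L <= M /\ L' <= M /\ (M = L \/ M = L')).
  { unfold M, Rmax. destruct Rle_dec; lra. }
  destruct (Rle_lt_dec M t) as [HtM|HtM].
  { rewrite !Rmin_right by lra. replace (gam L) with y by (symmetry; apply Hg).
    replace (gam' L') with y' by (symmetry; apply Hg'). fold del. lra. }
  set (lam := t / M).
  assert (Et : t = lam * M) by (unfold lam; field; lra).
  assert (Hlam : 0 <= lam <= 1) by (split; nra).
  pose proof (cat0_convexity x y y' gam gam' lam Hg Hg' Hlam) as Hconv. fold L L' del in Hconv.
  pose proof (Rmin_scale_dist lam M L Hlam ltac:(lra)) as B1.
  pose proof (Rmin_scale_dist lam M L' Hlam ltac:(lra)) as B2.
  rewrite <- Et in B1, B2.
  assert (R1 : d (gam (Rmin t L)) (gam (lam * L)) = Rabs (Rmin t L - lam * L)).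
  { apply (geodesic_dist x y gam _ _ Hg); fold L; [split; [apply Rmin_glb; lra|apply Rmin_r]|split; nra]. }
  assert (R2 : d (gam' (lam * L')) (gam' (Rmin t L')) = Rabs (Rmin t L' - lam * L')).
  { rewrite Rabs_minus_sym. apply (geodesic_dist x y' gam' _ _ Hg'); fold L';
      [split; nra|split; [apply Rmin_glb; lra|apply Rmin_r]]. }
  pose proof (metric_triangle (gam (Rmin t L)) (gam (lam * L)) (gam' (Rmin t L'))).
  pose proof (metric_triangle (gam (lam * L)) (gam' (lam * L')) (gam' (Rmin t L'))).
  destruct HM as (_ & _ & [E|E]); rewrite E in B1, B2; nra.
Qed.
End CAT0.

Lemma le_list_max (l : list nat) n : In n l -> (n <= list_max l)%nat.
Proof. intro Hn. exact (proj1 (Forall_forall _ _) (proj1 (list_max_le l _) (le_n _)) n Hn). Qed.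

Lemma compact_bounded {X : Type} (d : X -> X -> R) (Hm : is_metric d) K x :
  compact_set d K -> exists r, forall y, K y -> d x y <= r.
Proof.
  intro HK. destruct (HK nat (fun n y => d x y < INR n)) as [l Hl].
  - intros n y Hy. exists (INR n - d x y). split; [lra|].
    intros z Hz. pose proof (metric_triangle d Hm x y z). lra.
  - intros y _. destruct (INR_unbounded (d x y)) as [n Hn]. exists n. lra.
  - exists (INR (list_max l)). intros y Hy. destruct (Hl y Hy) as [n [Hn Hy']].
    apply le_list_max, le_INR in Hn. lra.
Qed.

Section Action.
Context (G : Type) (mul : G -> G -> G) (one : G) (inv : G -> G) (HG : is_group mul one inv)
  (X : Type) (x0 : X) (d : X -> X -> R) (Hm : is_metric d) (Hproper : proper_space d)
  (Hgeod : geodesic_space d) (Hcat : CAT0 d)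
  (act : G -> X -> X) (Hact : isometric_action mul one d act)
  (Hpd : properly_discontinuous d act) (Hcc : cocompact d act).

Local Notation mul1g := (mul1g mul one inv HG).
Local Notation mulg1 := (mulg1 mul one inv HG).
Local Notation mulVKg := (mulVKg mul one inv HG).
Local Notation mulKg := (mulKg mul one inv HG).
Local Notation invg1 := (invg1 mul one inv HG).
Local Notation prodG_app := (prodG_app mul one inv HG).
Local Notation metric_ge0 := (metric_ge0 d Hm).
Local Notation metric_xx := (metric_xx d Hm).
Local Notation metric_sym := (metric_sym d Hm).
Local Notation metric_triangle := (metric_triangle d Hm).
Local Notation prod := (prodG mul one).
Local Notation dS := (dS mul one inv).

Lemma act_one x : act one x = x. Proof. apply Hact. Qed.
Lemma act_mul g h x : act (mul g h) x = act g (act h x). Proof. apply Hact. Qed.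
Lemma act_dist g x y : d (act g x) (act g y) = d x y. Proof. apply Hact. Qed.

Lemma orbit_dist a b : d x0 (act (mul (inv a) b) x0) = d (act a x0) (act b x0).
Proof. rewrite <- (act_dist a), <- act_mul, mulVKg. reflexivity. Qed.

Lemma codiameter_exists : exists rho, 0 <= rho /\ forall x, exists h, d (act h x0) x <= rho.
Proof.
  destruct Hcc as [K [HK Hcover]].
  destruct (compact_bounded d Hm K x0 HK) as [rho Hrho].
  exists (Rmax 0 rho). split; [apply Rmax_l|].
  intro x. destruct (Hcover x) as [h [y [Ky ->]]]. exists h.
  rewrite act_dist. eapply Rle_trans; [apply Hrho, Ky|apply Rmax_r].
Qed.

Definition rho : R := proj1_sig (constructive_indefinite_description _ codiameter_exists).

Lemma rho_ge0 : 0 <= rho.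
Proof. exact (proj1 (proj2_sig (constructive_indefinite_description _ codiameter_exists))). Qed.

Lemma near_exists x : exists h, d (act h x0) x <= rho.
Proof. exact (proj2 (proj2_sig (constructive_indefinite_description _ codiameter_exists)) x). Qed.

Definition near (x : X) : G := proj1_sig (constructive_indefinite_description _ (near_exists x)).

Lemma near_dist x : d (act (near x) x0) x <= rho.
Proof. exact (proj2_sig (constructive_indefinite_description _ (near_exists x))). Qed.

Lemma orbit_ball_finite r : exists l : list G, forall g, d x0 (act g x0) <= r -> In g l.
Proof.
  destruct (Rle_lt_dec 0 r) as [Hr|Hr].
  - destruct (Hpd _ (Hproper x0 r)) as [l Hl]. exists l. intros g Hg.
    apply Hl. exists x0. rewrite metric_xx. auto.
  - exists []. intros g Hg. pose proof (metric_ge0 x0 (act g x0)). lra.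
Qed.

Definition orbit_ball (r : R) : list G :=
  filter (fun g => if Rle_dec (d x0 (act g x0)) r then true else false)
    (proj1_sig (constructive_indefinite_description _ (orbit_ball_finite r))).

Lemma In_orbit_ball r g : In g (orbit_ball r) <-> d x0 (act g x0) <= r.
Proof.
  unfold orbit_ball. rewrite filter_In. split.
  - intros [_ H]. destruct Rle_dec; [assumption|discriminate].
  - intro H. split; [exact (proj2_sig (constructive_indefinite_description _ (orbit_ball_finite r)) g H)|].
    destruct Rle_dec; [reflexivity|contradiction].
Qed.

Definition r : R := 2 * rho + 1.
Definition gens : list G := orbit_ball r.

Lemma gens_inv s : In s gens -> In (inv s) gens.
Proof.
  unfold gens. rewrite !In_orbit_ball.
  rewrite <- (mulg1 (inv s)), orbit_dist, act_one, metric_sym. auto.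
Qed.

Lemma orbit_dist_prod l : (forall s, In s l -> In s gens) ->
  d x0 (act (prod l) x0) <= r * INR (length l).
Proof.
  induction l as [|s l IH]; intro Hl; simpl prod.
  - rewrite act_one, metric_xx. simpl. lra.
  - rewrite act_mul, length_cons, S_INR.
    pose proof (metric_triangle x0 (act s x0) (act s (act (prod l) x0))) as H.
    rewrite act_dist in H.
    assert (Hs : d x0 (act s x0) <= r) by (apply In_orbit_ball, Hl; left; reflexivity).
    pose proof (IH (fun t Ht => Hl t (or_intror Ht))). lra.
Qed.

Definition geo (g : G) : R -> X :=
  proj1_sig (constructive_indefinite_description _ (Hgeod x0 (act g x0))).

Lemma geo_spec g : geodesic_from d x0 (act g x0) (geo g).
Proof. exact (proj2_sig (constructive_indefinite_description _ (Hgeod x0 (act g x0)))). Qed.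

Definition dist0 (g : G) : R := d x0 (act g x0).

Definition geo_at (g : G) (t : R) : X := geo g (Rmin t (dist0 g)).

Lemma geo_at_0 g : geo_at g 0 = x0.
Proof. unfold geo_at. rewrite Rmin_left by apply metric_ge0. apply geo_spec. Qed.

Lemma geo_at_end g t : dist0 g <= t -> geo_at g t = act g x0.
Proof. intro H. unfold geo_at. rewrite Rmin_right by exact H. apply geo_spec. Qed.

Lemma geo_at_step g k : d (geo_at g (INR k)) (geo_at g (INR (S k))) <= 1.
Proof.
  pose proof (metric_ge0 x0 (act g x0)). pose proof (pos_INR k). rewrite S_INR.
  unfold geo_at, dist0. rewrite (geodesic_dist d x0 (act g x0) (geo g)).
  - eapply Rle_trans; [apply Rmin_lipschitz|].
    replace (INR k - (INR k + 1)) with (- (1)) by ring. rewrite Rabs_Ropp, Rabs_R1. lra.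
  - apply geo_spec.
  - split; [apply Rmin_glb; lra|apply Rmin_r].
  - split; [apply Rmin_glb; lra|apply Rmin_r].
Qed.

(* [len one = 0] is forced, but a nontrivial [g] may fix [x0], so [len g]
   cannot be read off [dist0 g] alone. *)
Definition len (g : G) : nat :=
  if excluded_middle_informative (g = one) then 0%nat
  else S (nat_min (fun n => dist0 g <= INR n)).

Lemma len_one : len one = 0%nat.
Proof. unfold len. destruct excluded_middle_informative; [reflexivity|congruence]. Qed.

Lemma len_eq0 g : len g = 0%nat -> g = one.
Proof. unfold len. destruct excluded_middle_informative; [auto|discriminate]. Qed.

Lemma dist0_ceil_exists g : exists n, dist0 g <= INR n.
Proof. destruct (INR_unbounded (dist0 g)) as [n Hn]. exists n. lra. Qed.

Lemma dist0_le_len g k : (len g <= k)%nat -> dist0 g <= INR k.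
Proof.
  unfold len. destruct excluded_middle_informative as [->|Hg]; intro Hk.
  - unfold dist0. rewrite act_one, metric_xx. apply pos_INR.
  - destruct (nat_min_spec _ (dist0_ceil_exists g)) as [Hceil _].
    eapply Rle_trans; [exact Hceil|]. apply le_INR. lia.
Qed.

Lemma len_le_dist0 g : INR (len g) <= dist0 g + 2.
Proof.
  pose proof (metric_ge0 x0 (act g x0)) as Hd. unfold len.
  destruct excluded_middle_informative; [simpl; unfold dist0 in *; lra|].
  destruct (nat_min_spec _ (dist0_ceil_exists g)) as [_ Hmin].
  destruct (nat_min (fun n => dist0 g <= INR n)) as [|m] eqn:E; [simpl; unfold dist0 in *; lra|].
  assert (INR m < dist0 g).
  { destruct (Rle_lt_dec (dist0 g) (INR m)) as [Hle|]; [|assumption].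
    specialize (Hmin m Hle). lia. }
  rewrite !S_INR. lra.
Qed.

Definition path (g : G) (k : nat) : G :=
  match k with
  | O => one
  | S _ => if Nat.leb (len g) k then g else near (geo_at g (INR k))
  end.

Lemma path_end g k : (len g <= k)%nat -> path g k = g.
Proof.
  intro H. destruct k as [|k]; simpl.
  - symmetry. apply len_eq0. lia.
  - destruct (Nat.leb_spec (len g) (S k)); [reflexivity|lia].
Qed.

Lemma path_near g k : d (act (path g k) x0) (geo_at g (INR k)) <= rho.
Proof.
  pose proof rho_ge0 as Hrho. destruct k as [|k]; unfold path.
  - rewrite act_one, geo_at_0, metric_xx. lra.
  - destruct (Nat.leb_spec (len g) (S k)) as [Hk|Hk]; [|apply near_dist].
    rewrite geo_at_end by (apply dist0_le_len; exact Hk). rewrite metric_xx. lra.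
Qed.

Lemma path_step g k : In (mul (inv (path g k)) (path g (S k))) gens.
Proof.
  unfold gens. apply In_orbit_ball. rewrite orbit_dist.
  pose proof (path_near g k). pose proof (path_near g (S k)). pose proof (geo_at_step g k).
  pose proof (metric_triangle (act (path g k) x0) (geo_at g (INR k)) (act (path g (S k)) x0)).
  pose proof (metric_triangle (geo_at g (INR k)) (geo_at g (INR (S k))) (act (path g (S k)) x0)).
  rewrite (metric_sym (geo_at g (INR (S k)))) in *. unfold r. lra.
Qed.

Lemma gens_generate g : exists l, (forall s, In s l -> In s gens) /\ prod l = g.
Proof.
  exists (map (fun i => mul (inv (path g i)) (path g (S i))) (seq 0 (len g))). split.
  - intros s Hs. apply in_map_iff in Hs. destruct Hs as [i [<- _]]. apply path_step.
  - rewrite <- (path_end g (len g)) at 2 by lia. generalize (len g) as k.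
    induction k as [|k IH]; [reflexivity|].
    rewrite seq_S, map_app, prodG_app, IH. simpl.
    rewrite mulg1. apply mulVKg.
Qed.

Definition word_of_length (h : G) (n : nat) : Prop :=
  exists l : list G, length l = n /\ (forall s, In s l -> In s gens) /\ prod l = mul (inv one) h.

Lemma dS_spec h : word_of_length h (dS gens h one) /\
  forall m, word_of_length h m -> (dS gens h one <= m)%nat.
Proof.
  apply nat_min_spec. destruct (gens_generate h) as [l [Hl Hprod]].
  exists (length l), l. rewrite invg1, mul1g. auto.
Qed.

Definition spell (h : G) : list G :=
  proj1_sig (constructive_indefinite_description _ (proj1 (dS_spec h))).

Lemma spell_spec h : length (spell h) = dS gens h one /\
  (forall s, In s (spell h) -> In s gens) /\ prod (spell h) = h.
Proof.
  unfold spell. destruct (constructive_indefinite_description _ _) as [l (Hlen & Hon & Hprod)].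
  cbn [proj1_sig]. rewrite invg1, mul1g in Hprod. auto.
Qed.

Lemma spell_one : spell one = [].
Proof.
  destruct (spell_spec one) as [Hlen _].
  assert (Hzero : (dS gens one one <= 0)%nat).
  { apply dS_spec. exists []. simpl. rewrite invg1, mulg1. intuition. }
  destruct (spell one); [reflexivity|simpl in Hlen; lia].
Qed.

Lemma dist0_le_dS g : dist0 g <= r * INR (dS gens g one).
Proof.
  destruct (spell_spec g) as (Hlen & Hon & Hprod). unfold dist0.
  rewrite <- Hprod at 1. rewrite <- Hlen. apply orbit_dist_prod, Hon.
Qed.

(* Rung elements move [x0] by at most [2 rho + 2 r] (fellow travelling),
   so their word lengths are bounded on the finite ball of that radius. *)
Definition K : nat := list_max (map (fun h => dS gens h one) (orbit_ball (2 * rho + 2 * r))).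

Lemma neighbour_dist g s : In s gens -> d (act g x0) (act (mul g s) x0) <= r.
Proof. intro Hs. rewrite <- orbit_dist, mulKg. apply In_orbit_ball, Hs. Qed.

Lemma rung_short g s k : In s gens ->
  (length (spell (mul (inv (path g k)) (path (mul g s) k))) <= K)%nat.
Proof.
  intro Hs. set (g' := mul g s).
  pose proof (neighbour_dist g s Hs) as Hgg'. fold g' in Hgg'.
  pose proof (cat0_fellow_travel d Hm Hcat x0 (act g x0) (act g' x0) (geo g) (geo g') (INR k)
    (geo_spec g) (geo_spec g') (pos_INR k)) as Hfellow.
  fold (dist0 g) (dist0 g') (geo_at g (INR k)) (geo_at g' (INR k)) in Hfellow.
  rewrite (proj1 (spell_spec (mul (inv (path g k)) (path g' k)))).
  apply le_list_max, (in_map (fun h => dS gens h one)), In_orbit_ball.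
  rewrite orbit_dist. pose proof (path_near g k). pose proof (path_near g' k).
  pose proof (metric_triangle (act (path g k) x0) (geo_at g (INR k)) (act (path g' k) x0)).
  pose proof (metric_triangle (geo_at g (INR k)) (geo_at g' (INR k)) (act (path g' k) x0)).
  rewrite (metric_sym (geo_at g' (INR k))) in *. lra.
Qed.

Definition relators : list (list (G * bool)) := short_relators mul one inv gens (2 * K + 2).

Lemma gens_area_at_most_loop u : word_on gens u -> eval_word mul one inv u = one ->
  area_at_most gens relators u (loop_cost mul inv len one u).
Proof.
  apply (area_at_most_loop mul one inv HG gens relators K path len spell);
    auto using gens_inv, path_end, len_one, path_step, spell_one, rung_short.
  - intros h s. apply spell_spec.
  - intro h. apply spell_spec.
  - intros. apply In_short_relators; assumption.
Qed.

Lemma ladder_cost_le g s : In s gens ->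
  INR (ladder_cost mul inv len g (s, false)) <= (r + 3) * (INR (dS gens (mul g s) one) + 1).
Proof.
  intro Hs. unfold ladder_cost. change (eval_letter inv (s, false)) with s.
  set (g' := mul g s).
  assert (Hdist : dist0 g <= dist0 g' + r).
  { pose proof (neighbour_dist g s Hs) as Hn. fold g' in Hn.
    pose proof (metric_triangle x0 (act g' x0) (act g x0)) as Ht.
    rewrite (metric_sym (act g' x0)) in Ht. unfold dist0. lra. }
  pose proof (len_le_dist0 g). pose proof (len_le_dist0 g'). pose proof (dist0_le_dS g').
  pose proof (pos_INR (dS gens g' one)). pose proof rho_ge0.
  rewrite plus_INR. simpl (INR 1). unfold r in *.
  destruct (Nat.max_spec (len g) (len g')) as [[_ ->]|[_ ->]]; nra.
Qed.

Lemma gens_presentation : finite_presentation mul one inv gens relators.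
Proof.
  split; [exact gens_inv|split; [|split; [exact gens_generate|]]].
  - apply short_relators_spec.
  - intros u Hu Hone. exact (area_at_most_witness _ _ _ _ (gens_area_at_most_loop u Hu Hone)).
Qed.

Lemma Area_le_radial_sum w : (forall s, In s w -> In s gens) -> prod w = one ->
  INR (Area gens relators (pos_word w)) <= (r + 3) * radial_sum mul one inv gens w.
Proof.
  intros Hw Hone. eapply Rle_trans; [apply le_INR, Area_le, gens_area_at_most_loop|].
  - apply word_on_pos_word, Hw.
  - rewrite eval_pos_word by exact HG. exact Hone.
  - unfold radial_sum. erewrite map_ext; [|intro i; rewrite <- (mul1g (prod (firstn i w))); reflexivity].
    apply (loop_cost_pos_word_le mul one inv HG gens len (r + 3) (fun h => INR (dS gens h one) + 1));
      [exact ladder_cost_le|exact Hw].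
Qed.

Lemma cat0_radial_isoperimetric :
  exists (S : list G) (Rl : list (list (G * bool))),
    finite_presentation mul one inv S Rl /\
    exists C : R, 0 < C /\
      forall w : list G, (forall s, In s w -> In s S) -> prod w = one ->
        INR (Area S Rl (pos_word w)) <= C * radial_sum mul one inv S w.
Proof.
  exists gens, relators. split; [exact gens_presentation|].
  exists (r + 3). split; [unfold r; pose proof rho_ge0; lra|exact Area_le_radial_sum].
Qed.
End Action.

Theorem theorem4p2
  (G : Type) (mul : G -> G -> G) (one : G) (inv : G -> G)
  (HG : is_group mul one inv)
  (X : Type) (x0 : X) (d : X -> X -> R)
  (Hmetric : is_metric d) (Hproper : proper_space d)
  (Hgeod : geodesic_space d) (Hcat : CAT0 d)
  (act : G -> X -> X) (Hact : isometric_action mul one d act)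
  (Hpd : properly_discontinuous d act) (Hcc : cocompact d act) :
  exists (S : list G) (Rl : list (list (G * bool))),
    finite_presentation mul one inv S Rl /\
    exists C : R, 0 < C /\
      forall w : list G, (forall s, In s w -> In s S) -> prodG mul one w = one ->
        INR (Area S Rl (pos_word w)) <= C * radial_sum mul one inv S w.
Proof.
  exact (cat0_radial_isoperimetric G mul one inv HG X x0 d Hmetric Hproper Hgeod Hcat
           act Hact Hpd Hcc).
Qed.
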